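(* Let $\mathcal{T}_H$ be a partition of the box $\Omega\subset\mathbb{R}^3$ into axis-parallel rectangular boxes and let $\mathcal{T}_h$ be its uniform refinement (each box of $\mathcal{T}_H$ split into $8$ congruent boxes). Let $E$ be an interior edge of $\mathcal{T}_H$ parallel to the $x_1$-axis, let $T_E^1,\dots,T_E^4\in\mathcal{T}_H$ be the four coarse elements sharing $E$, put $D=\bigcup_{i=1}^4 T_E^i$, and let $v$ be the midpoint of $E$ (a vertex of $\mathcal{T}_h$). Let $e_1,\dots,e_6$ be the six edges of $\mathcal{T}_h$ having $v$ as an endpoint, where $e_{2i-1},e_{2i}$ are parallel to the $x_i$-axis ($i=1,2,3$). For each $i$ fix the tangential direction $\mathbf{t}_{x_i}$ of all fine edges parallel to the $x_i$-axis, oriented so that $v$ is the terminal endpoint of $e_{2i-1}$ (and the initial endpoint of $e_{2i}$). Let $\mathbf{u}\in N_h(D)$ (the lowest order hexahedral Nédélec space on the fine elements contained in $D$) satisfy: (i) $\mathbf{u}\cdot\mathbf{t}_{x_i}=-1$ on $e_{2i-1}$ and $\mathbf{u}\cdot\mathbf{t}_{x_i}=1$ on $e_{2i}$ for $i=1,2,3$; (ii) the tangential component of $\mathbf{u}$ vanishes on every other fine edge lying on $\bigcup_{i=1}^4\partial T_E^i$; (iii) for each $i=1,\dots,4$, $\int_{T_E^i}\mathbf{u}\cdot\mathbf{w}\,d\mathbf{x}=0$ for all $\mathbf{w}\in N_h^{T_E^i}$. Then $\nabla\times\mathbf{u}$ does not vanish identically.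
   Context: The lowest order Nédélec space on a set of axis-parallel boxes consists of vector fields in $H(\mathbf{curl})$ whose restriction to each box $T$ is of the form $(a_1+a_2x_2+a_3x_3+a_4x_2x_3,\; b_1+b_2x_3+b_3x_1+b_4x_3x_1,\; c_1+c_2x_1+c_3x_2+c_4x_1x_2)$; on each fine edge $e$ the tangential component $\mathbf{u}\cdot\mathbf{t}_e$ is constant, and these twelve edge values per box determine the field. For $T\in\mathcal{T}_H$, $N_h^T$ denotes the set of fields of the fine Nédélec space that vanish outside $T$ (equivalently, whose tangential components vanish on all fine edges not lying in the interior of $T$). *)

From Stdlib Require Import Reals Lra.
From Coquelicot Require Import Coquelicot.
Open Scope R_scope.

Record vec3 := V3 { v1 : R ; v2 : R ; v3 : R }.
Definition zero3 : vec3 := V3 0 0 0.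
Definition dot (a b : vec3) : R := v1 a * v1 b + v2 a * v2 b + v3 a * v3 b.

Definition field := R -> R -> R -> vec3.

Definition is_ned (F : field) : Prop :=
  exists a1 a2 a3 a4 b1 b2 b3 b4 c1 c2 c3 c4 : R,
    forall x1 x2 x3,
      F x1 x2 x3 =
      V3 (a1 + a2 * x2 + a3 * x3 + a4 * x2 * x3)
         (b1 + b2 * x3 + b3 * x1 + b4 * x3 * x1)
         (c1 + c2 * x1 + c3 * x2 + c4 * x1 * x2).

Definition curl (F : field) (x1 x2 x3 : R) : vec3 :=
  V3 (Derive (fun t => v3 (F x1 t x3)) x2 - Derive (fun t => v2 (F x1 x2 t)) x3)
     (Derive (fun t => v1 (F x1 x2 t)) x3 - Derive (fun t => v3 (F t x2 x3)) x1)
     (Derive (fun t => v2 (F t x2 x3)) x1 - Derive (fun t => v1 (F x1 t x3)) x2).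

(** E = [mx0, mx2] x {my2} x {mz2} is an interior coarse edge parallel to x1.
    The four coarse boxes sharing E are
      [mx0,mx2] x [my0,my2] x [mz0,mz2],  [mx0,mx2] x [my2,my4] x [mz0,mz2],
      [mx0,mx2] x [my0,my2] x [mz2,mz4],  [mx0,mx2] x [my2,my4] x [mz2,mz4]. *)
Record mesh := Mesh {
  mx0 : R ; mx2 : R ;
  my0 : R ; my2 : R ; my4 : R ;
  mz0 : R ; mz2 : R ; mz4 : R }.

Definition mesh_ok (m : mesh) : Prop :=
  mx0 m < mx2 m /\ my0 m < my2 m < my4 m /\ mz0 m < mz2 m < mz4 m.

Definition mid (a b : R) : R := (a + b) / 2.

Definition X (m : mesh) (n : nat) : R :=
  match n with 0%nat => mx0 m | 1%nat => mid (mx0 m) (mx2 m) | _ => mx2 m end.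
Definition Y (m : mesh) (n : nat) : R :=
  match n with
  | 0%nat => my0 m | 1%nat => mid (my0 m) (my2 m) | 2%nat => my2 m
  | 3%nat => mid (my2 m) (my4 m) | _ => my4 m end.
Definition Z (m : mesh) (n : nat) : R :=
  match n with
  | 0%nat => mz0 m | 1%nat => mid (mz0 m) (mz2 m) | 2%nat => mz2 m
  | 3%nat => mid (mz2 m) (mz4 m) | _ => mz4 m end.

(** Fine box (i,j,k) = [X i, X (i+1)] x [Y j, Y (j+1)] x [Z k, Z (k+1)];
    the fine boxes of D are those with i < 2, j < 4, k < 4. *)
Definition in_D (i j k : nat) : Prop := (i < 2 /\ j < 4 /\ k < 4)%nat.

(** Coarse box (p,q), p q < 2, is [X 0, X 2] x [Y (2p), Y (2p+2)] x [Z (2q), Z (2q+2)];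
    these are the four elements T_E^1..T_E^4. Fine box (i,j,k) of D lies in it iff: *)
Definition in_coarse (p q j k : nat) : Prop := (j / 2 = p /\ k / 2 = q)%nat.

Definition pwfield := nat -> nat -> nat -> field.

(** Tangential continuity across every interior face of the fine mesh of D
    (H(curl)-conformity of a piecewise smooth field). *)
Definition conforming (m : mesh) (u : pwfield) : Prop :=
  (forall i j k, in_D i j k -> in_D (S i) j k ->
     forall y z, Y m j <= y <= Y m (S j) -> Z m k <= z <= Z m (S k) ->
       v2 (u i j k (X m (S i)) y z) = v2 (u (S i) j k (X m (S i)) y z) /\
       v3 (u i j k (X m (S i)) y z) = v3 (u (S i) j k (X m (S i)) y z)) /\
  (forall i j k, in_D i j k -> in_D i (S j) k ->
     forall x z, X m i <= x <= X m (S i) -> Z m k <= z <= Z m (S k) ->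
       v1 (u i j k x (Y m (S j)) z) = v1 (u i (S j) k x (Y m (S j)) z) /\
       v3 (u i j k x (Y m (S j)) z) = v3 (u i (S j) k x (Y m (S j)) z)) /\
  (forall i j k, in_D i j k -> in_D i j (S k) ->
     forall x y, X m i <= x <= X m (S i) -> Y m j <= y <= Y m (S j) ->
       v1 (u i j k x y (Z m (S k))) = v1 (u i j (S k) x y (Z m (S k))) /\
       v2 (u i j k x y (Z m (S k))) = v2 (u i j (S k) x y (Z m (S k)))).

Definition in_Nh_D (m : mesh) (u : pwfield) : Prop :=
  (forall i j k, in_D i j k -> is_ned (u i j k)) /\ conforming m u.

Definition zero_tan_bdry_D (m : mesh) (w : pwfield) : Prop :=
  (forall j k, (j < 4 /\ k < 4)%nat ->
     forall y z, Y m j <= y <= Y m (S j) -> Z m k <= z <= Z m (S k) ->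
       v2 (w 0%nat j k (X m 0) y z) = 0 /\ v3 (w 0%nat j k (X m 0) y z) = 0 /\
       v2 (w 1%nat j k (X m 2) y z) = 0 /\ v3 (w 1%nat j k (X m 2) y z) = 0) /\
  (forall i k, (i < 2 /\ k < 4)%nat ->
     forall x z, X m i <= x <= X m (S i) -> Z m k <= z <= Z m (S k) ->
       v1 (w i 0%nat k x (Y m 0) z) = 0 /\ v3 (w i 0%nat k x (Y m 0) z) = 0 /\
       v1 (w i 3%nat k x (Y m 4) z) = 0 /\ v3 (w i 3%nat k x (Y m 4) z) = 0) /\
  (forall i j, (i < 2 /\ j < 4)%nat ->
     forall x y, X m i <= x <= X m (S i) -> Y m j <= y <= Y m (S j) ->
       v1 (w i j 0%nat x y (Z m 0)) = 0 /\ v2 (w i j 0%nat x y (Z m 0)) = 0 /\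
       v1 (w i j 3%nat x y (Z m 4)) = 0 /\ v2 (w i j 3%nat x y (Z m 4)) = 0).

(** N_h^T for T = coarse box (p,q): fine Nedelec fields vanishing outside T
    (zero on the other fine boxes, zero tangential trace on the boundary of D,
    H(curl)-conforming). *)
Definition in_NhT (m : mesh) (p q : nat) (w : pwfield) : Prop :=
  (forall i j k, in_D i j k -> is_ned (w i j k)) /\
  conforming m w /\ zero_tan_bdry_D m w /\
  (forall i j k, in_D i j k -> ~ in_coarse p q j k ->
     forall x y z, w i j k x y z = zero3).

Definition box_int (m : mesh) (i j k : nat) (f : R -> R -> R -> R) : R :=
  RInt (fun x => RInt (fun y => RInt (fun z => f x y z)
                                  (Z m k) (Z m (S k)))
                      (Y m j) (Y m (S j)))
       (X m i) (X m (S i)).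

Definition sum2 (f : nat -> R) : R := f 0%nat + f 1%nat.

Definition coarse_int_dot (m : mesh) (p q : nat) (u w : pwfield) : R :=
  sum2 (fun a => sum2 (fun b => sum2 (fun c =>
    let i := a in let j := (2 * p + b)%nat in let k := (2 * q + c)%nat in
    box_int m i j k (fun x y z => dot (u i j k x y z) (w i j k x y z))))).

(** * Fine edges.  An edge is given by its direction and its initial node
    (i,j,k) (node (i,j,k) = (X i, Y j, Z k)); it is oriented in the
    positive coordinate direction t_{x_d}. *)
Inductive dir := D1 | D2 | D3.

Definition fine_edge (d : dir) (i j k : nat) : Prop :=
  match d with
  | D1 => (i < 2 /\ j <= 4 /\ k <= 4)%nat
  | D2 => (i <= 2 /\ j < 4 /\ k <= 4)%nat
  | D3 => (i <= 2 /\ j <= 4 /\ k < 4)%nat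
  end.

Definition edge_range (m : mesh) (d : dir) (i j k : nat) (s : R) : Prop :=
  match d with
  | D1 => X m i <= s <= X m (S i)
  | D2 => Y m j <= s <= Y m (S j)
  | D3 => Z m k <= s <= Z m (S k)
  end.

Definition eval_on_edge (m : mesh) (d : dir) (i j k : nat) (F : field) (s : R) : vec3 :=
  match d with
  | D1 => F s (Y m j) (Z m k)
  | D2 => F (X m i) s (Z m k)
  | D3 => F (X m i) (Y m j) s
  end.

Definition edge_point (m : mesh) (d : dir) (i j k : nat) (s : R) : R * R * R :=
  match d with
  | D1 => (s, Y m j, Z m k)
  | D2 => (X m i, s, Z m k)
  | D3 => (X m i, Y m j, s)
  end.

Definition tang (d : dir) (a : vec3) : R :=
  match d with D1 => v1 a | D2 => v2 a | D3 => v3 a end.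

Definition box_has_edge (d : dir) (i j k bi bj bk : nat) : Prop :=
  match d with
  | D1 => i = bi /\ (j = bj \/ j = S bj) /\ (k = bk \/ k = S bk)
  | D2 => j = bj /\ (i = bi \/ i = S bi) /\ (k = bk \/ k = S bk)
  | D3 => k = bk /\ (i = bi \/ i = S bi) /\ (j = bj \/ j = S bj)
  end.

(** u . t_{x_d} = c on the fine edge (d,i,j,k) (as seen from every fine box of D
    having this edge). *)
Definition tang_on_edge (m : mesh) (u : pwfield) (d : dir) (i j k : nat) (c : R) : Prop :=
  forall bi bj bk, in_D bi bj bk -> box_has_edge d i j k bi bj bk ->
    forall s, edge_range m d i j k s ->
      tang d (eval_on_edge m d i j k (u bi bj bk) s) = c.

Definition on_bdry_coarse (m : mesh) (p q : nat) (P : R * R * R) : Prop :=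
  let '(x, y, z) := P in
  let l1 := X m 0 in let h1 := X m 2 in
  let l2 := Y m (2 * p) in let h2 := Y m (2 * p + 2) in
  let l3 := Z m (2 * q) in let h3 := Z m (2 * q + 2) in
  (l1 <= x <= h1 /\ l2 <= y <= h2 /\ l3 <= z <= h3) /\
  (x = l1 \/ x = h1 \/ y = l2 \/ y = h2 \/ z = l3 \/ z = h3).

Definition edge_on_coarse_bdry (m : mesh) (d : dir) (i j k : nat) : Prop :=
  forall s, edge_range m d i j k s ->
    exists p q, (p < 2 /\ q < 2)%nat /\ on_bdry_coarse m p q (edge_point m d i j k s).

(** The six fine edges e_1..e_6 at v = (X 1, Y 2, Z 2) (midpoint of E):
    e_{2l-1} ends at v, e_{2l} starts at v. *)
Definition is_star_edge (d : dir) (i j k : nat) : Prop :=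
  (d = D1 /\ i = 0%nat /\ j = 2%nat /\ k = 2%nat) \/
  (d = D1 /\ i = 1%nat /\ j = 2%nat /\ k = 2%nat) \/
  (d = D2 /\ i = 1%nat /\ j = 1%nat /\ k = 2%nat) \/
  (d = D2 /\ i = 1%nat /\ j = 2%nat /\ k = 2%nat) \/
  (d = D3 /\ i = 1%nat /\ j = 2%nat /\ k = 1%nat) \/
  (d = D3 /\ i = 1%nat /\ j = 2%nat /\ k = 2%nat).

Definition cond_i (m : mesh) (u : pwfield) : Prop :=
  tang_on_edge m u D1 0 2 2 (-1) /\ tang_on_edge m u D1 1 2 2 1 /\
  tang_on_edge m u D2 1 1 2 (-1) /\ tang_on_edge m u D2 1 2 2 1 /\
  tang_on_edge m u D3 1 2 1 (-1) /\ tang_on_edge m u D3 1 2 2 1.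

Definition cond_ii (m : mesh) (u : pwfield) : Prop :=
  forall d i j k, fine_edge d i j k -> ~ is_star_edge d i j k ->
    edge_on_coarse_bdry m d i j k -> tang_on_edge m u d i j k 0.

Definition cond_iii (m : mesh) (u : pwfield) : Prop :=
  forall p q, (p < 2 /\ q < 2)%nat ->
    forall w, in_NhT m p q w -> coarse_int_dot m p q u w = 0.

Definition curl_not_identically_zero (m : mesh) (u : pwfield) : Prop :=
  exists i j k, in_D i j k /\
    exists x y z, X m i < x < X m (S i) /\ Y m j < y < Y m (S j) /\
                  Z m k < z < Z m (S k) /\ curl (u i j k) x y z <> zero3.

(* Work in T = T_E^1 = [X 0, X 2] x [Y 0, Y 2] x [Z 0, Z 2]; its only fine z-edges off its
   boundary are the two above (X 1, Y 1), carrying the values g0 (lower layer) and g1 (upper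
   layer) of u . t. By (i) and (ii) the z-component of u on T is g0, g1 and -1 (on e_5) times
   the corresponding bilinear hat functions, so testing (iii) with the Nedelec basis functions
   of the two interior edges gives 4 g0 = 0 and 4 g1 - 1 = 0.
   If u were curl-free on every fine box, its circulation around every fine face would vanish.
   Around the faces of the fine box [X 1, X 2] x [Y 1, Y 2] x [Z 1, Z 2] of T at v this forces
   that box to be a cube; then around the faces x = X 1 of this box and of the box below it,
   which share a y-edge, it forces g1 = - g0: a contradiction. *)

From Stdlib Require Import Reals Lra Lia Classical FunctionalExtensionality.
From Coquelicot Require Import Coquelicot.
Open Scope R_scope.

Lemma curl_ned_form a1 a2 a3 a4 b1 b2 b3 b4 c1 c2 c3 c4 x y z :
  curl (fun x1 x2 x3 => V3 (a1 + a2 * x2 + a3 * x3 + a4 * x2 * x3)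
                           (b1 + b2 * x3 + b3 * x1 + b4 * x3 * x1)
                           (c1 + c2 * x1 + c3 * x2 + c4 * x1 * x2)) x y z =
  V3 (c3 + c4 * x - (b2 + b4 * x)) (a3 + a4 * y - (c2 + c4 * y))
     (b3 + b4 * z - (a2 + a4 * z)).
Proof.
  unfold curl; cbn [v1 v2 v3].
  f_equal; f_equal; apply is_derive_unique; auto_derive; auto; ring.
Qed.

(* Tangential components of a Nedelec field are constant along edges, so these identities
   say that its circulation around every axis-parallel rectangle vanishes. *)
Record zero_face_circulation (F : field) : Prop := {
  circulation_x : forall a y y' z z' s t,
    (v3 (F a y' s) - v3 (F a y s)) * (z' - z) = (v2 (F a t z') - v2 (F a t z)) * (y' - y);
  circulation_y : forall a x x' z z' s t,
    (v1 (F t a z') - v1 (F t a z)) * (x' - x) = (v3 (F x' a s) - v3 (F x a s)) * (z' - z);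
  circulation_z : forall a x x' y y' s t,
    (v2 (F x' s a) - v2 (F x s a)) * (y' - y) = (v1 (F t y' a) - v1 (F t y a)) * (x' - x) }.

Lemma affine_zero_at_two_points p q s s' :
  s <> s' -> p + q * s = 0 -> p + q * s' = 0 -> p = 0 /\ q = 0.
Proof.
  intros Hss' Hs Hs'.
  assert (Hq : q = 0).
  { assert (Hqs : q * (s - s') = 0) by lra.
    destruct (Rmult_integral _ _ Hqs); [assumption | lra]. }
  subst q; lra.
Qed.

Lemma curl_free_ned_zero_face_circulation F x0 x1 y0 y1 z0 z1 :
  is_ned F -> x0 < x1 -> y0 < y1 -> z0 < z1 ->
  (forall x y z, x0 < x < x1 -> y0 < y < y1 -> z0 < z < z1 -> curl F x y z = zero3) ->
  zero_face_circulation F.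
Proof.
  intros (a1 & a2 & a3 & a4 & b1 & b2 & b3 & b4 & c1 & c2 & c3 & c4 & HF) Hx Hy Hz Hcurl.
  assert (EF : F = fun p1 p2 p3 => V3 (a1 + a2 * p2 + a3 * p3 + a4 * p2 * p3)
                                      (b1 + b2 * p3 + b3 * p1 + b4 * p3 * p1)
                                      (c1 + c2 * p1 + c3 * p2 + c4 * p1 * p2)).
  { do 3 (apply functional_extensionality; intro); apply HF. }
  subst F.
  (* The curl is affine in each coordinate, so vanishing at two interior points kills it. *)
  assert (Hmid := Hcurl ((x0 + x1) / 2) ((y0 + y1) / 2) ((z0 + z1) / 2)
                    ltac:(lra) ltac:(lra) ltac:(lra)).
  assert (Hqrt := Hcurl ((3 * x0 + x1) / 4) ((3 * y0 + y1) / 4) ((3 * z0 + z1) / 4)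
                    ltac:(lra) ltac:(lra) ltac:(lra)).
  rewrite curl_ned_form in Hmid, Hqrt.
  injection Hmid as M1 M2 M3; injection Hqrt as Q1 Q2 Q3.
  destruct (affine_zero_at_two_points (c3 - b2) (c4 - b4) ((x0 + x1) / 2) ((3 * x0 + x1) / 4))
    as [E1 E2]; [lra | lra | lra |].
  destruct (affine_zero_at_two_points (a3 - c2) (a4 - c4) ((y0 + y1) / 2) ((3 * y0 + y1) / 4))
    as [E3 E4]; [lra | lra | lra |].
  destruct (affine_zero_at_two_points (b3 - a2) (b4 - a4) ((z0 + z1) / 2) ((3 * z0 + z1) / 4))
    as [E5 E6]; [lra | lra | lra |].
  replace c3 with b2 by lra; replace c4 with b4 by lra; replace a3 with c2 by lra;
    replace a4 with b4 by lra; replace b3 with a2 by lra.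
  split; intros; cbn [v1 v2 v3]; ring.
Qed.

Definition hat (a b x : R) : R := (x - a) / (b - a).

Lemma hat_left a b : hat a b a = 0.
Proof. unfold hat, Rdiv; ring. Qed.

Lemma hat_right a b : a <> b -> hat a b b = 1.
Proof. intro Hab; unfold hat; field; lra. Qed.

Lemma ned_v3_bilinear F x0 x1 y0 y1 z x y z' :
  is_ned F -> x0 <> x1 -> y0 <> y1 ->
  v3 (F x y z') =
    v3 (F x0 y0 z) * hat x1 x0 x * hat y1 y0 y + v3 (F x1 y0 z) * hat x0 x1 x * hat y1 y0 y +
    v3 (F x0 y1 z) * hat x1 x0 x * hat y0 y1 y + v3 (F x1 y1 z) * hat x0 x1 x * hat y0 y1 y.
Proof.
  intros (a1 & a2 & a3 & a4 & b1 & b2 & b3 & b4 & c1 & c2 & c3 & c4 & HF) Hx Hy.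
  rewrite !HF; cbn [v3]; unfold hat; field; lra.
Qed.

Definition affine (f : R -> R) : Prop := exists p q, forall x, f x = p + q * x.

Lemma affine_hat a b : affine (hat a b).
Proof. exists (- a / (b - a)), (1 / (b - a)); intro x; unfold hat, Rdiv; ring. Qed.

Lemma affine_lincomb c e f g : affine f -> affine g -> affine (fun x => c * f x + e * g x).
Proof.
  intros [p [q Hf]] [r [s Hg]].
  exists (c * p + e * r), (c * q + e * s); intro x; rewrite Hf, Hg; ring.
Qed.

(* Simpson's rule, exact for the quadratic [f * g]. *)
Lemma is_RInt_affine_mul (f g : R -> R) (a b v : R) :
  affine f -> affine g ->
  v = (b - a) / 6 * (2 * f a * g a + f a * g b + f b * g a + 2 * f b * g b) ->
  is_RInt (fun x => f x * g x) a b v.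
Proof.
  intros [p [q Hf]] [r [s Hg]] ->.
  set (P x := p * r * x + (p * s + q * r) * x ^ 2 / 2 + q * s * x ^ 3 / 3).
  apply (is_RInt_ext (fun x => (p + q * x) * (r + s * x))).
  { intros x _; rewrite Hf, Hg; reflexivity. }
  replace ((b - a) / 6 * _) with (P b - P a) by (rewrite !Hf, !Hg; unfold P; field).
  apply (is_RInt_derive P).
  - intros x _; unfold P; auto_derive; [exact I | field].
  - intros x _; apply (@ex_derive_continuous R_AbsRing R_NormedModule); auto_derive; exact I.
Qed.

Lemma box_int_separable m i j k (h : R -> R -> R -> R) (F G : R -> R) (IF IG : R) :
  (forall x y z, h x y z = F x * G y) ->
  is_RInt F (X m i) (X m (S i)) IF -> is_RInt G (Y m j) (Y m (S j)) IG ->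
  box_int m i j k h = (Z m (S k) - Z m k) * IG * IF.
Proof.
  intros Hh HF HG; unfold box_int.
  rewrite (RInt_ext _ (fun x => (Z m (S k) - Z m k) * IG * F x)).
  { apply is_RInt_unique, (is_RInt_scal F), HF. }
  intros x _.
  rewrite (RInt_ext _ (fun y => (Z m (S k) - Z m k) * F x * G y)).
  { apply is_RInt_unique.
    replace ((Z m (S k) - Z m k) * IG * F x) with ((Z m (S k) - Z m k) * F x * IG) by ring.
    apply (is_RInt_scal G), HG. }
  intros y _.
  rewrite (RInt_ext _ (fun _ => F x * G y)) by (intros; apply Hh).
  rewrite RInt_const; unfold scal; cbn; unfold mult; cbn; ring.
Qed.

Lemma RInt_zero a b : RInt (fun _ => 0) a b = 0.
Proof. rewrite RInt_const; unfold scal; cbn; unfold mult; cbn; ring. Qed.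

Lemma box_int_zero m i j k h : (forall x y z, h x y z = 0) -> box_int m i j k h = 0.
Proof.
  intros Hh; unfold box_int.
  rewrite (RInt_ext _ (fun _ => 0)); [apply RInt_zero | intros x _].
  rewrite (RInt_ext _ (fun _ => 0)); [apply RInt_zero | intros y _].
  rewrite (RInt_ext _ (fun _ => 0)) by (intros; apply Hh).
  apply RInt_zero.
Qed.

Lemma mesh_nodes_increasing m : mesh_ok m ->
  X m 0 < X m 1 < X m 2 /\
  Y m 0 < Y m 1 /\ Y m 1 < Y m 2 /\ Y m 2 < Y m 3 /\ Y m 3 < Y m 4 /\
  Z m 0 < Z m 1 /\ Z m 1 < Z m 2 /\ Z m 2 < Z m 3 /\ Z m 3 < Z m 4.
Proof. unfold mesh_ok, X, Y, Z, mid; cbn; lra. Qed.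

Lemma bisection_steps m :
  X m 1 - X m 0 = X m 2 - X m 1 /\ Y m 1 - Y m 0 = Y m 2 - Y m 1 /\
  Z m 1 - Z m 0 = Z m 2 - Z m 1.
Proof. unfold X, Y, Z, mid; cbn; lra. Qed.

Lemma fine_box_nondegenerate m i j k : mesh_ok m -> in_D i j k ->
  X m i < X m (S i) /\ Y m j < Y m (S j) /\ Z m k < Z m (S k).
Proof.
  intros Hm (Hi & Hj & Hk); pose proof (mesh_nodes_increasing m Hm).
  repeat split.
  - destruct i as [|[|]]; [lra | lra | lia].
  - destruct j as [|[|[|[|]]]]; [lra | lra | lra | lra | lia].
  - destruct k as [|[|[|[|]]]]; [lra | lra | lra | lra | lia].
Qed.

(* The Nedelec basis function of the fine edge {X 1} x {Y 1} x [Z kk, Z (kk+1)],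
   interior to the coarse box (0,0). *)
Definition zedge_basis (m : mesh) (kk : nat) : pwfield := fun i j k =>
  if andb (Nat.ltb j 2) (Nat.eqb k kk)
  then fun x y _ => V3 0 0 (hat (X m (2 * i)) (X m 1) x * hat (Y m (2 * j)) (Y m 1) y)
  else fun _ _ _ => zero3.

Lemma zedge_basis_ned m kk i j k : is_ned (zedge_basis m kk i j k).
Proof.
  unfold zedge_basis; destruct (andb _ _).
  - destruct (affine_hat (X m (2 * i)) (X m 1)) as [p [q Hp]].
    destruct (affine_hat (Y m (2 * j)) (Y m 1)) as [r [s Hr]].
    exists 0, 0, 0, 0, 0, 0, 0, 0, (p * r), (q * r), (p * s), (q * s).
    intros; rewrite Hp, Hr; f_equal; ring.
  - exists 0, 0, 0, 0, 0, 0, 0, 0, 0, 0, 0, 0.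
    intros; unfold zero3; f_equal; ring.
Qed.

Lemma zedge_basis_in_NhT m kk : mesh_ok m -> (kk < 2)%nat -> in_NhT m 0 0 (zedge_basis m kk).
Proof.
  intros Hm Hkk.
  destruct (mesh_nodes_increasing m Hm) as (HX & HY01 & HY12 & _).
  assert (HX0 : hat (X m 0) (X m 1) (X m 1) = 1) by (apply hat_right; lra).
  assert (HX2 : hat (X m 2) (X m 1) (X m 1) = 1) by (apply hat_right; lra).
  assert (HY0 : hat (Y m 0) (Y m 1) (Y m 1) = 1) by (apply hat_right; lra).
  assert (HY2 : hat (Y m 2) (Y m 1) (Y m 1) = 1) by (apply hat_right; lra).
  split; [intros; apply zedge_basis_ned |].
  split; [| split].
  - split; [| split].
    + intros i j k [Hi _] [Hi' _] y z _ _.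
      destruct i as [|]; [| lia].
      unfold zedge_basis; destruct (andb _ _); cbn -[X Y hat];
        rewrite ?HX0, ?HX2; split; reflexivity.
    + intros i j k [_ [Hj _]] [_ [Hj' _]] x z _ _.
      unfold zedge_basis.
      destruct j as [|[|[|]]]; [| | | lia]; cbn -[X Y hat];
        destruct (Nat.eqb k kk); cbn -[X Y hat]; rewrite ?HY0, ?HY2, ?hat_left;
        split; try reflexivity; ring.
    + intros i j k _ _ x y _ _.
      unfold zedge_basis; destruct (andb _ (Nat.eqb k kk)), (andb _ (Nat.eqb (S k) kk));
        split; reflexivity.
  - split; [| split].
    + intros j k _ y z _ _.
      unfold zedge_basis; destruct (andb _ _); cbn -[X Y hat];
        rewrite ?hat_left; repeat split; ring.
    + intros i k _ x z _ _.
      unfold zedge_basis; destruct (andb (Nat.ltb 0 2) _); cbn -[X Y hat];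
        rewrite ?hat_left; repeat split; ring.
    + intros i j _ x y _ _.
      unfold zedge_basis; destruct (andb _ (Nat.eqb 0 kk)), (andb _ (Nat.eqb 3 kk));
        repeat split; reflexivity.
  - intros i j k _ Hout x y z.
    unfold zedge_basis.
    destruct (Nat.ltb j 2) eqn:Hj, (Nat.eqb k kk) eqn:Hk; try reflexivity.
    exfalso; apply Hout.
    apply Nat.ltb_lt in Hj; apply Nat.eqb_eq in Hk; subst k.
    unfold in_coarse; split; apply Nat.div_small; lia.
Qed.

Lemma box_int_zedge_basis_off_layer m u kk a b c :
  c <> kk ->
  box_int m a b c (fun x y z => dot (u a b c x y z) (zedge_basis m kk a b c x y z)) = 0.
Proof.
  intros Hc; apply box_int_zero; intros x y z.
  unfold zedge_basis; apply Nat.eqb_neq in Hc; rewrite Hc, Bool.andb_false_r.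
  unfold dot, zero3; cbn; ring.
Qed.

Lemma box_int_zedge_basis_on_layer m u kk a b c e :
  mesh_ok m -> (a < 2)%nat -> (b < 2)%nat ->
  (forall x y z, v3 (u a b kk x y z) =
     hat (X m (2 * a)) (X m 1) x * (c * hat (Y m (2 * b)) (Y m 1) y + e * hat (Y m 1) (Y m (2 * b)) y)) ->
  box_int m a b kk (fun x y z => dot (u a b kk x y z) (zedge_basis m kk a b kk x y z)) =
    (Z m (S kk) - Z m kk) * ((Y m 1 - Y m 0) * (2 * c + e) / 6) * ((X m 1 - X m 0) / 3).
Proof.
  intros Hm Ha Hb Hv.
  destruct (mesh_nodes_increasing m Hm) as (HX & HY01 & HY12 & _).
  destruct (bisection_steps m) as (HXs & HYs & _).
  apply box_int_separable with
    (F := fun x => hat (X m (2 * a)) (X m 1) x * hat (X m (2 * a)) (X m 1) x)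
    (G := fun y => (c * hat (Y m (2 * b)) (Y m 1) y + e * hat (Y m 1) (Y m (2 * b)) y) *
                   hat (Y m (2 * b)) (Y m 1) y).
  - intros x y z; unfold zedge_basis, dot.
    rewrite (proj2 (Nat.ltb_lt b 2) Hb), Nat.eqb_refl; cbn [andb v1 v2 v3].
    rewrite Hv; ring.
  - apply is_RInt_affine_mul; try apply affine_hat.
    destruct a as [|[|]]; [| | lia]; cbn -[X hat];
      rewrite ?hat_left, ?hat_right by lra; lra.
  - apply is_RInt_affine_mul; [apply affine_lincomb; apply affine_hat | apply affine_hat |].
    destruct b as [|[|]]; [| | lia]; cbn -[Y hat];
      rewrite ?hat_left, ?hat_right by lra; rewrite <- ?HYs; field.
Qed.

Lemma coarse_int_dot_zedge_basis m u kk c (e : nat -> R) :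
  mesh_ok m -> (kk < 2)%nat ->
  (forall a b x y z, (a < 2)%nat -> (b < 2)%nat ->
     v3 (u a b kk x y z) =
     hat (X m (2 * a)) (X m 1) x *
       (c * hat (Y m (2 * b)) (Y m 1) y + e b * hat (Y m 1) (Y m (2 * b)) y)) ->
  coarse_int_dot m 0 0 u (zedge_basis m kk) =
    (Z m (S kk) - Z m kk) * (X m 1 - X m 0) * (Y m 1 - Y m 0) * (4 * c + e 0%nat + e 1%nat) / 9.
Proof.
  intros Hm Hkk Hv.
  assert (Hlayers : forall a b, (a < 2)%nat -> (b < 2)%nat ->
    sum2 (fun k => box_int m a b k
                     (fun x y z => dot (u a b k x y z) (zedge_basis m kk a b k x y z))) =
    (Z m (S kk) - Z m kk) * ((Y m 1 - Y m 0) * (2 * c + e b) / 6) * ((X m 1 - X m 0) / 3)).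
  { intros a b Ha Hb; unfold sum2; cbv beta.
    destruct kk as [|[|]]; [| | lia].
    - rewrite (box_int_zedge_basis_on_layer m u 0 a b c (e b)) by auto.
      rewrite (box_int_zedge_basis_off_layer m u 0 a b 1) by lia; ring.
    - rewrite (box_int_zedge_basis_on_layer m u 1 a b c (e b)) by auto.
      rewrite (box_int_zedge_basis_off_layer m u 1 a b 0) by lia; ring. }
  unfold coarse_int_dot; cbn zeta; cbn [Nat.mul Nat.add].
  unfold sum2 at 1; cbv beta; unfold sum2 at 1 3; cbv beta.
  rewrite !Hlayers by lia.
  field.
Qed.

Lemma tang_at_edge_start m u d i j k c bi bj bk :
  mesh_ok m -> tang_on_edge m u d i j k c -> in_D bi bj bk -> box_has_edge d i j k bi bj bk ->
  tang d (u bi bj bk (X m i) (Y m j) (Z m k)) = c.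
Proof.
  intros Hm Hedge HD Hbox.
  pose proof (fine_box_nondegenerate m bi bj bk Hm HD).
  destruct d; apply (Hedge bi bj bk HD Hbox); destruct Hbox as (-> & _); cbn -[X Y Z]; lra.
Qed.

Definition curl_free_on_D (m : mesh) (u : pwfield) : Prop :=
  forall i j k, in_D i j k ->
    forall x y z, X m i < x < X m (S i) -> Y m j < y < Y m (S j) -> Z m k < z < Z m (S k) ->
      curl (u i j k) x y z = zero3.

Lemma curl_free_on_D_of_not_nonzero m u :
  ~ curl_not_identically_zero m u -> curl_free_on_D m u.
Proof.
  intros Hnz i j k HD x y z Hx Hy Hz.
  apply NNPP; intro Hne; apply Hnz.
  exists i, j, k; split; [exact HD |].
  exists x, y, z; auto.
Qed.

Ltac edge_value Hm :=
  match goal with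
  | |- v1 (?u ?bi ?bj ?bk (X ?m ?i) (Y ?m ?j) (Z ?m ?k)) = ?c =>
      apply (tang_at_edge_start m u D1 i j k c bi bj bk Hm)
  | |- v2 (?u ?bi ?bj ?bk (X ?m ?i) (Y ?m ?j) (Z ?m ?k)) = ?c =>
      apply (tang_at_edge_start m u D2 i j k c bi bj bk Hm)
  | |- v3 (?u ?bi ?bj ?bk (X ?m ?i) (Y ?m ?j) (Z ?m ?k)) = ?c =>
      apply (tang_at_edge_start m u D3 i j k c bi bj bk Hm)
  end; [| unfold in_D; lia | unfold box_has_edge; lia].

(* Every boundary edge we read lies on the boundary of the coarse box (0,0). *)
Ltac boundary_edge Hm Hii :=
  apply Hii;
  [ unfold fine_edge; lia
  | let Hstar := fresh in intro Hstar; unfold is_star_edge in Hstar;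
    decompose [or and] Hstar; congruence
  | let s := fresh "s" in let Hs := fresh "Hs" in
    intros s Hs; exists 0%nat, 0%nat; split; [lia |];
    pose proof (mesh_nodes_increasing _ Hm);
    unfold edge_range in Hs; unfold on_bdry_coarse, edge_point; cbn -[X Y Z];
    split; [repeat split; lra | repeat (first [left; reflexivity | right]); reflexivity] ].

Ltac read_edge Hm Hii := edge_value Hm; first [assumption | boundary_edge Hm Hii].

Section CurlFreePatch.

Variables (m : mesh) (u : pwfield).
Hypotheses (Hm : mesh_ok m) (Hu : in_Nh_D m u) (Hi : cond_i m u) (Hii : cond_ii m u).

Definition interior_zedge_value (kk : nat) : R := v3 (u 1%nat 1%nat kk (X m 1) (Y m 1) (Z m kk)).

(* u . t on the z-edge above (X 1, Y (2 b)) in layer kk: only e_5 has a nonzero value. *)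
Definition outer_zedge_value (kk b : nat) : R :=
  match kk, b with 1%nat, 1%nat => -1 | _, _ => 0 end.

Lemma interior_zedge_value_common kk a b : (kk < 2)%nat -> (a < 2)%nat -> (b < 2)%nat ->
  v3 (u a b kk (X m 1) (Y m 1) (Z m kk)) = interior_zedge_value kk.
Proof.
  intros Hkk Ha Hb.
  destruct Hu as [_ [Hconf_x [Hconf_y _]]].
  pose proof (mesh_nodes_increasing m Hm).
  assert (Hx : forall b', (b' < 2)%nat ->
            v3 (u 0%nat b' kk (X m 1) (Y m 1) (Z m kk)) = v3 (u 1%nat b' kk (X m 1) (Y m 1) (Z m kk))).
  { intros b' Hb'; apply (Hconf_x 0%nat b' kk); unfold in_D; try lia;
      destruct b' as [|[|]], kk as [|[|]]; cbn -[X Y Z]; lra || lia. }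
  assert (Hy : v3 (u 1%nat 0%nat kk (X m 1) (Y m 1) (Z m kk)) = interior_zedge_value kk).
  { apply (Hconf_y 1%nat 0%nat kk); unfold in_D; try lia;
      destruct kk as [|[|]]; cbn -[X Y Z]; lra || lia. }
  unfold interior_zedge_value in *.
  destruct a as [|[|]], b as [|[|]]; try lia; rewrite ?Hx, ?Hy by lia; reflexivity.
Qed.

Lemma layer_corner_values kk a b : (kk < 2)%nat -> (a < 2)%nat -> (b < 2)%nat ->
  v3 (u a b kk (X m (2 * a)) (Y m (2 * b)) (Z m kk)) = 0 /\
  v3 (u a b kk (X m (2 * a)) (Y m 1) (Z m kk)) = 0 /\
  v3 (u a b kk (X m 1) (Y m (2 * b)) (Z m kk)) = outer_zedge_value kk b.
Proof.
  intros Hkk Ha Hb.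
  destruct Hi as (_ & _ & _ & _ & He5 & _).
  destruct kk as [|[|]], a as [|[|]], b as [|[|]]; try lia; cbn [Nat.mul Nat.add outer_zedge_value];
    repeat split; read_edge Hm Hii.
Qed.

Lemma layer_v3_form kk a b x y z : (kk < 2)%nat -> (a < 2)%nat -> (b < 2)%nat ->
  v3 (u a b kk x y z) =
  hat (X m (2 * a)) (X m 1) x *
    (interior_zedge_value kk * hat (Y m (2 * b)) (Y m 1) y +
     outer_zedge_value kk b * hat (Y m 1) (Y m (2 * b)) y).
Proof.
  intros Hkk Ha Hb.
  destruct (layer_corner_values kk a b Hkk Ha Hb) as (H00 & H01 & H10).
  pose proof (mesh_nodes_increasing m Hm).
  rewrite (ned_v3_bilinear (u a b kk) (X m (2 * a)) (X m 1) (Y m (2 * b)) (Y m 1) (Z m kk)).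
  - rewrite H00, H01, H10, interior_zedge_value_common by assumption; ring.
  - apply (proj1 Hu); unfold in_D; lia.
  - destruct a as [|[|]]; cbn [Nat.mul Nat.add]; lra || lia.
  - destruct b as [|[|]]; cbn [Nat.mul Nat.add]; lra || lia.
Qed.


Hypothesis Hiii : cond_iii m u.

Lemma interior_zedge_value_orthogonality kk : (kk < 2)%nat ->
  4 * interior_zedge_value kk + outer_zedge_value kk 0 + outer_zedge_value kk 1 = 0.
Proof.
  intros Hkk.
  pose proof (mesh_nodes_increasing m Hm).
  assert (Hvol : 0 < (Z m (S kk) - Z m kk) * (X m 1 - X m 0) * (Y m 1 - Y m 0)).
  { destruct kk as [|[|]]; [| | lia]; repeat apply Rmult_lt_0_compat; lra. }
  pose proof (Hiii 0%nat 0%nat ltac:(lia) (zedge_basis m kk) (zedge_basis_in_NhT m kk Hm Hkk)) as Horth.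
  rewrite (coarse_int_dot_zedge_basis m u kk _ (outer_zedge_value kk) Hm Hkk) in Horth
    by (intros; apply layer_v3_form; assumption).
  apply (Rmult_eq_reg_l ((Z m (S kk) - Z m kk) * (X m 1 - X m 0) * (Y m 1 - Y m 0) / 9)); lra.
Qed.


Hypothesis Hcurl : curl_free_on_D m u.

Lemma patch_zero_face_circulation i j k : in_D i j k -> zero_face_circulation (u i j k).
Proof.
  intros HD; destruct (fine_box_nondegenerate m i j k Hm HD) as (Hx & Hy & Hz).
  apply (curl_free_ned_zero_face_circulation _ _ _ _ _ _ _ (proj1 Hu i j k HD) Hx Hy Hz).
  apply Hcurl, HD.
Qed.

Lemma curl_free_cubic_cells : X m 2 - X m 1 = Z m 2 - Z m 1 /\ Y m 2 - Y m 1 = X m 2 - X m 1.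
Proof.
  destruct Hi as (_ & He2 & He3 & _ & He5 & _).
  pose proof (patch_zero_face_circulation 1 1 1 ltac:(unfold in_D; lia)) as C.
  assert (E1 : v1 (u 1%nat 1%nat 1%nat (X m 1) (Y m 2) (Z m 1)) = 0) by read_edge Hm Hii.
  assert (E2 : v1 (u 1%nat 1%nat 1%nat (X m 1) (Y m 2) (Z m 2)) = 1) by read_edge Hm Hii.
  assert (E3 : v3 (u 1%nat 1%nat 1%nat (X m 2) (Y m 2) (Z m 1)) = 0) by read_edge Hm Hii.
  assert (E4 : v3 (u 1%nat 1%nat 1%nat (X m 1) (Y m 2) (Z m 1)) = -1) by read_edge Hm Hii.
  assert (E5 : v2 (u 1%nat 1%nat 1%nat (X m 2) (Y m 1) (Z m 2)) = 0) by read_edge Hm Hii.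
  assert (E6 : v2 (u 1%nat 1%nat 1%nat (X m 1) (Y m 1) (Z m 2)) = -1) by read_edge Hm Hii.
  assert (E7 : v1 (u 1%nat 1%nat 1%nat (X m 1) (Y m 1) (Z m 2)) = 0) by read_edge Hm Hii.
  pose proof (circulation_y _ C (Y m 2) (X m 1) (X m 2) (Z m 1) (Z m 2) (Z m 1) (X m 1)) as Cy.
  pose proof (circulation_z _ C (Z m 2) (X m 1) (X m 2) (Y m 1) (Y m 2) (Y m 1) (X m 1)) as Cz.
  rewrite E1, E2, E3, E4 in Cy; rewrite E2, E5, E6, E7 in Cz.
  lra.
Qed.

Lemma interior_zedge_values_opposite : interior_zedge_value 1 = - interior_zedge_value 0.
Proof.
  destruct curl_free_cubic_cells as [Hxz Hyx].
  destruct (bisection_steps m) as (_ & _ & Hzs).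
  pose proof (mesh_nodes_increasing m Hm).
  destruct Hi as (_ & _ & He3 & _ & He5 & _).
  pose proof (patch_zero_face_circulation 1 1 1 ltac:(unfold in_D; lia)) as C1.
  pose proof (patch_zero_face_circulation 1 1 0 ltac:(unfold in_D; lia)) as C0.
  assert (E1 : v3 (u 1%nat 1%nat 1%nat (X m 1) (Y m 2) (Z m 1)) = -1) by read_edge Hm Hii.
  assert (E2 : v2 (u 1%nat 1%nat 1%nat (X m 1) (Y m 1) (Z m 2)) = -1) by read_edge Hm Hii.
  assert (E3 : v3 (u 1%nat 1%nat 0%nat (X m 1) (Y m 2) (Z m 0)) = 0) by read_edge Hm Hii.
  assert (E4 : v2 (u 1%nat 1%nat 0%nat (X m 1) (Y m 1) (Z m 0)) = 0) by read_edge Hm Hii.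
  destruct Hu as [_ [_ [_ Hconf_z]]].
  destruct (Hconf_z 1%nat 1%nat 0%nat ltac:(unfold in_D; lia) ltac:(unfold in_D; lia)
              (X m 1) (Y m 1) ltac:(lra) ltac:(lra)) as [_ Hshared].
  pose proof (circulation_x _ C1 (X m 1) (Y m 1) (Y m 2) (Z m 1) (Z m 2) (Z m 1) (Y m 1)) as Cx1.
  pose proof (circulation_x _ C0 (X m 1) (Y m 1) (Y m 2) (Z m 0) (Z m 1) (Z m 0) (Y m 1)) as Cx0.
  rewrite E1, E2 in Cx1; rewrite E3, E4, Hshared in Cx0.
  unfold interior_zedge_value.
  apply (Rmult_eq_reg_r (Y m 2 - Y m 1)); [| lra].
  replace (Z m 2 - Z m 1) with (Y m 2 - Y m 1) in Cx1 by lra.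
  replace (Z m 1 - Z m 0) with (Y m 2 - Y m 1) in Cx0 by lra.
  lra.
Qed.

End CurlFreePatch.

Theorem lemma4p1 (m : mesh) (Hm : mesh_ok m) (u : pwfield)
  (Hu : in_Nh_D m u) (Hi : cond_i m u) (Hii : cond_ii m u) (Hiii : cond_iii m u) :
  curl_not_identically_zero m u.
Proof.
  apply NNPP; intros Hnz.
  pose proof (curl_free_on_D_of_not_nonzero m u Hnz) as Hcurl.
  pose proof (interior_zedge_value_orthogonality m u Hm Hu Hi Hii Hiii 0 ltac:(lia)) as Horth0.
  pose proof (interior_zedge_value_orthogonality m u Hm Hu Hi Hii Hiii 1 ltac:(lia)) as Horth1.
  pose proof (interior_zedge_values_opposite m u Hm Hu Hi Hii Hcurl) as Hopp.
  cbn [outer_zedge_value] in Horth0, Horth1.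
  lra.
Qed.
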